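(* For $\alpha\in(0,\pi/2]$ and $d\in\mathbb{R}$ let $$f_\alpha(d)=960\alpha-8d^2(d^4-4d^2+20)\sin\alpha+d^2(3d^4-12d^2-4)\sin(2\alpha).$$ Then for every $\alpha\in(0,\pi/2]$, $f_\alpha(d)<0$ for all $d\in[5/2,\infty)$. *)

From Stdlib Require Import Reals Lra.
Open Scope R_scope.

Definition f_alpha (alpha d : R) : R :=
  960 * alpha - 8 * d ^ 2 * (d ^ 4 - 4 * d ^ 2 + 20) * sin alpha
  + d ^ 2 * (3 * d ^ 4 - 12 * d ^ 2 - 4) * sin (2 * alpha).

(* Writing D = d^2, the double-angle formula gives
     f_alpha(d) = 960 alpha - 2 sin alpha (A(D) + B(D) (1 - cos alpha))
   with cubics A and B that are increasing on [25/4, oo), so it suffices to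
   take D = 25/4.  Truncated Taylor series bound sin alpha and 1 - cos alpha
   from below by polynomials in t = alpha^2, and the Machin-type bound
   PI <= 68/21 gives t <= 3.  On [0, 3] the resulting lower bound for
   sin alpha (A + B (1 - cos alpha)) / alpha decreases from about 613 to about
   502, so it stays above 480. *)
From Stdlib Require Import Reals Lra Psatz.
Open Scope R_scope.

Lemma PI_le_68_21 : PI <= 68 / 21.
Proof.
  destruct (PI_2_3_7_ineq 0) as [_ H].
  unfold tg_alt, PI_2_3_7_tg, Ratan_seq in H; simpl in H.
  lra.
Qed.

Lemma sin_lb_eq a : sin_lb a = a - a^3/6 + a^5/120 - a^7/5040.
Proof.
  unfold sin_lb, sin_approx, sin_term; cbn [sum_f_R0 Nat.mul Nat.add].
  rewrite !INR_IZR_INZ; simpl Z.of_nat.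
  field.
Qed.

Lemma cos_ub_eq a : cos_ub a = 1 - a^2/2 + a^4/24 - a^6/720 + a^8/40320.
Proof.
  unfold cos_ub, cos_approx, cos_term; cbn [sum_f_R0 Nat.mul Nat.add].
  (* factoring out 8 keeps [fact 8] from being unfolded in unary *)
  rewrite (fact_simpl 7), mult_INR, !INR_IZR_INZ; simpl Z.of_nat.
  field.
Qed.

Lemma sin_ge_taylor7 a : 0 <= a <= PI -> a - a^3/6 + a^5/120 - a^7/5040 <= sin a.
Proof.
  intros [Ha0 Ha1].
  rewrite <- sin_lb_eq.
  now apply SIN.
Qed.

Lemma one_sub_cos_ge_taylor4 a :
  - PI / 2 <= a <= PI / 2 -> a^2/2 - a^4/24 <= 1 - cos a.
Proof.
  intros [Ha0 Ha1].
  assert (Hcos := proj2 (COS a Ha0 Ha1)); rewrite cos_ub_eq in Hcos.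
  assert (Ha2 : a^2 <= 4) by (generalize PI_4; nra).
  assert (Ha6 : 0 <= a^6) by (replace (a^6) with ((a^3)^2) by ring; apply pow2_ge_0).
  assert (a^8/40320 <= a^6/720) by nra.
  lra.
Qed.

Definition coef_sin (D : R) : R := D * (D^2 - 4*D + 84).
Definition coef_versin (D : R) : R := D * (3*D^2 - 12*D - 4).

Lemma f_alpha_versin_form a d :
  f_alpha a d = 960 * a - 2 * sin a * (coef_sin (d^2) + coef_versin (d^2) * (1 - cos a)).
Proof. unfold f_alpha, coef_sin, coef_versin; rewrite sin_2a; ring. Qed.

(* 39225/64 and 15275/64 are the values at D = 25/4. *)
Lemma coef_sin_ge D : 25/4 <= D -> 39225/64 <= coef_sin D.
Proof.
  intros HD; unfold coef_sin.
  replace D with (25/4 + (D - 25/4)) by ring.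
  assert (0 <= D - 25/4) by lra.
  nra.
Qed.

Lemma coef_versin_ge D : 25/4 <= D -> 15275/64 <= coef_versin D.
Proof.
  intros HD; unfold coef_versin.
  replace D with (25/4 + (D - 25/4)) by ring.
  assert (0 <= D - 25/4) by lra.
  nra.
Qed.

Lemma taylor_product_gt_480 t : 0 <= t <= 3 ->
  480 < (1 - t/6 + t^2/120 - t^3/5040) * (39225/64 + 15275/64 * (t/2 - t^2/24)).
Proof. intros; nra. Qed.

Lemma sin_mul_versin_combination_gt a A B :
  0 < a <= PI / 2 -> 39225/64 <= A -> 15275/64 <= B ->
  480 * a < sin a * (A + B * (1 - cos a)).
Proof.
  intros [Ha0 Ha1] HA HB.
  set (t := a^2).
  set (p := 1 - t/6 + t^2/120 - t^3/5040).
  set (q := t/2 - t^2/24).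
  assert (Ht : 0 <= t <= 3) by (generalize PI_le_68_21; unfold t; nra).
  assert (Hp : 0 < p) by (unfold p; nra).
  assert (Hq : 0 <= q) by (unfold q; nra).
  assert (Hsin : a * p <= sin a).
  { replace (a * p) with (a - a^3/6 + a^5/120 - a^7/5040) by (unfold p, t; field).
    apply sin_ge_taylor7; generalize PI_RGT_0; lra. }
  assert (Hversin : q <= 1 - cos a).
  { replace q with (a^2/2 - a^4/24) by (unfold q, t; field).
    apply one_sub_cos_ge_taylor4; generalize PI_RGT_0; lra. }
  assert (Hcomb : 39225/64 + 15275/64 * q <= A + B * (1 - cos a)).
  { assert (15275/64 * q <= B * (1 - cos a)) by (apply Rmult_le_compat; lra).
    lra. }
  assert (Hcore := taylor_product_gt_480 t Ht); fold p q in Hcore.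
  assert (a * p * (39225/64 + 15275/64 * q) <= sin a * (A + B * (1 - cos a))).
  { apply Rmult_le_compat; nra. }
  nra.
Qed.

Theorem lemma2 : forall alpha d : R,
  0 < alpha <= PI / 2 -> 5 / 2 <= d -> f_alpha alpha d < 0.
Proof.
  intros alpha d Halpha Hd.
  assert (HD : 25/4 <= d^2) by nra.
  rewrite f_alpha_versin_form.
  assert (Hpos := sin_mul_versin_combination_gt alpha _ _ Halpha
                    (coef_sin_ge _ HD) (coef_versin_ge _ HD)).
  lra.
Qed.
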